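(* Let $S$ be the set of $27$ sextactic points of the Fermat cubic $F$ (see context), and let $\mathcal{L}$ be the set of lines in $\mathbb{P}^2_{\mathbb{C}}$ containing at least three points of $S$. These are exactly the lines occurring as components of reducible conics that contain six points of $S$. Then: <ul> <li>$|\mathcal{L}|=81$;</li> <li>each line of $\mathcal{L}$ contains exactly $3$ points of $S$;</li> <li>each point of $S$ lies on exactly $9$ lines of $\mathcal{L}$.</li> </ul> That is, $(\mathcal{L},S)$ is an $(81_3,27_9)$ configuration.
   Context: $F\subset\mathbb{P}^2_{\mathbb{C}}$ is the Fermat cubic $x^3+y^3+z^3=0$. The set of its sextactic points is $$S=\{[x:y:z]\in\mathbb{P}^2: x^3+y^3+z^3=0,\ (x^3-y^3)(y^3-z^3)(z^3-x^3)=0\}.$$ These are the $27$ points of $F$ at which the osculating conic has local contact order at least $6$ with $F$. *)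

From HB Require Import structures.
From mathcomp Require Import all_boot all_order all_algebra.
Set Implicit Arguments. Unset Strict Implicit. Unset Printing Implicit Defensive.
Import GRing.Theory.
Local Open Scope ring_scope.

(* A triple of coordinates; used both for points [x:y:z] of P^2 and for
   lines a x + b y + c z = 0 (dual coordinates [a:b:c]). *)
Definition triple (F : fieldType) := (F * F * F)%type.

(* Canonical representative of a point of P^2(F): the first nonzero
   coordinate equals 1.  This excludes the zero vector, and every point of
   P^2 has exactly one such representative. *)
Definition normalized (F : fieldType) (v : triple F) : Prop :=
  let: (x, y, z) := v in
  if x != 0 then x = 1 else if y != 0 then y = 1 else z = 1.

Definition on_line (F : fieldType) (l p : triple F) : Prop :=
  let: (a, b, c) := l in let: (x, y, z) := p in a * x + b * y + c * z = 0.

Definition sextactic_eq (F : fieldType) (p : triple F) : Prop :=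
  let: (x, y, z) := p in
  x ^+ 3 + y ^+ 3 + z ^+ 3 = 0 /\
  (x ^+ 3 - y ^+ 3) * (y ^+ 3 - z ^+ 3) * (z ^+ 3 - x ^+ 3) = 0.

Definition inS (F : fieldType) (p : triple F) : Prop :=
  normalized p /\ sextactic_eq p.

Definition inL (F : fieldType) (l : triple F) : Prop :=
  normalized l /\
  exists p q r : triple F,
    [/\ inS p, inS q & inS r] /\ [/\ on_line l p, on_line l q & on_line l r] /\
    [/\ p <> q, q <> r & p <> r].

Definition has_card (T : eqType) (P : T -> Prop) (n : nat) : Prop :=
  exists s : seq T, [/\ uniq s, size s = n & forall x, x \in s <-> P x].

From Stdlib Require Import ZArith.
From mathcomp Require Import all_boot all_order all_algebra.
From mathcomp Require Import ssrZ ring.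
Import ssrZ.Instances.
Set Implicit Arguments. Unset Strict Implicit. Unset Printing Implicit Defensive.
Import GRing.Theory.
Local Open Scope ring_scope.

(* Fix t with t^3 = 2 and a primitive cube root of unity w.  Solving the
   equations of S shows that its 27 points are [1 : w^i : -t w^j],
   [1 : -t w^j : w^i] and [t : -w^i : -w^j], so the whole configuration is
   defined over Z[w, t].  All incidences are then decided by exact
   arithmetic in Z[w, t], computed by vm_compute: a vanishing expression
   vanishes in F, and a nonvanishing one is certified by its norm (the
   product of its Galois conjugates), a nonzero integer, hence nonzero in F
   since F has characteristic 0.  Two distinct points of S span a line, so a
   line of L is determined by two of its points; this identifies L with the
   81 lines computed from pairs of points of S. *)

Local Open Scope Z_scope.

(* [(a0, a1, a2)] stands for a0 + a1 t + a2 t^2 in Z[t], t^3 = 2. *)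
Definition cubic := (Z * Z * Z)%type.

Definition cubic_add (a b : cubic) : cubic :=
  let: (a0, a1, a2) := a in let: (b0, b1, b2) := b in (a0 + b0, a1 + b1, a2 + b2).
Definition cubic_opp (a : cubic) : cubic :=
  let: (a0, a1, a2) := a in (- a0, - a1, - a2).
Definition cubic_mul (a b : cubic) : cubic :=
  let: (a0, a1, a2) := a in let: (b0, b1, b2) := b in
  (a0 * b0 + 2 * (a1 * b2 + a2 * b1), a0 * b1 + a1 * b0 + 2 * (a2 * b2),
   a0 * b2 + a1 * b1 + a2 * b0).

(* [(A, B)] stands for A + w B in Z[w, t], w^2 + w + 1 = 0. *)
Definition zwt := (cubic * cubic)%type.

Definition zwt_add (x y : zwt) : zwt :=
  let: (A, B) := x in let: (C, D) := y in (cubic_add A C, cubic_add B D).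
Definition zwt_opp (x : zwt) : zwt := let: (A, B) := x in (cubic_opp A, cubic_opp B).
Definition zwt_sub (x y : zwt) : zwt := zwt_add x (zwt_opp y).
Definition zwt_mul (x y : zwt) : zwt :=
  let: (A, B) := x in let: (C, D) := y in
  let BD := cubic_mul B D in
  (cubic_add (cubic_mul A C) (cubic_opp BD),
   cubic_add (cubic_add (cubic_mul A D) (cubic_mul B C)) (cubic_opp BD)).
Definition zwt_cube (x : zwt) : zwt := zwt_mul x (zwt_mul x x).

Definition zwt_of_Z (n : Z) : zwt := ((n, 0, 0), (0, 0, 0)).
Definition zwt0 : zwt := zwt_of_Z 0.
Definition zwt1 : zwt := zwt_of_Z 1.
Definition zwtT : zwt := ((0, 1, 0), (0, 0, 0)).
Definition zwtW : zwt := ((0, 0, 0), (1, 0, 0)).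
Definition zwtW2 : zwt := ((-1, 0, 0), (-1, 0, 0)).

Definition cubic_subst (b : zwt) (a : cubic) : zwt :=
  let: (a0, a1, a2) := a in
  zwt_add (zwt_of_Z a0) (zwt_mul (zwt_add (zwt_of_Z a1) (zwt_mul (zwt_of_Z a2) b)) b).
Definition zwt_subst (a b : zwt) (x : zwt) : zwt :=
  let: (A, B) := x in zwt_add (cubic_subst b A) (zwt_mul a (cubic_subst b B)).

(* The product of the six Galois conjugates [w -> w^i, t -> w^j t] of [x];
   it is a rational integer. *)
Definition zwt_norm (x : zwt) : zwt :=
  let conj i j := zwt_subst i (zwt_mul j zwtT) x in
  zwt_mul x (zwt_mul (conj zwtW zwtW) (zwt_mul (conj zwtW zwtW2)
    (zwt_mul (conj zwtW2 zwt1) (zwt_mul (conj zwtW2 zwtW) (conj zwtW2 zwtW2))))).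

Definition zwt_nonzero (x : zwt) : bool :=
  let n := (zwt_norm x).1.1.1 in (n != 0) && (zwt_norm x == zwt_of_Z n).

Local Close Scope Z_scope.

Definition vec := (zwt * zwt * zwt)%type.

Definition vcross (u v : vec) : vec :=
  let: (a1, a2, a3) := u in let: (b1, b2, b3) := v in
  (zwt_sub (zwt_mul a2 b3) (zwt_mul a3 b2), zwt_sub (zwt_mul a3 b1) (zwt_mul a1 b3),
   zwt_sub (zwt_mul a1 b2) (zwt_mul a2 b1)).
Definition vdot (u v : vec) : zwt :=
  let: (a1, a2, a3) := u in let: (b1, b2, b3) := v in
  zwt_add (zwt_add (zwt_mul a1 b1) (zwt_mul a2 b2)) (zwt_mul a3 b3).
Definition vec_zero (u : vec) : bool := u == (zwt0, zwt0, zwt0).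
Definition vec_nonzero (u : vec) : bool :=
  let: (a1, a2, a3) := u in [|| zwt_nonzero a1, zwt_nonzero a2 | zwt_nonzero a3].

Definition cube_roots1 : seq zwt := [:: zwt1; zwtW; zwtW2].

(* The 27 points, in three families according to which factor of
   (x^3 - y^3)(y^3 - z^3)(z^3 - x^3) vanishes. *)
Definition sextactic_vecs : seq vec :=
  [seq (zwt1, u, zwt_opp (zwt_mul zwtT v)) | u <- cube_roots1, v <- cube_roots1] ++
  [seq (zwt1, zwt_opp (zwt_mul zwtT v), u) | u <- cube_roots1, v <- cube_roots1] ++
  [seq (zwtT, zwt_opp u, zwt_opp v) | u <- cube_roots1, v <- cube_roots1].

Local Notation PS := sextactic_vecs.

Definition incident (m a : vec) : bool := vdot m a == zwt0.

Definition proportional (u v : vec) : bool := vec_zero (vcross u v).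

Fixpoint undup_proportional (s : seq vec) : seq vec :=
  if s is u :: s' then
    if has (proportional u) s' then undup_proportional s' else u :: undup_proportional s'
  else [::].

Definition rich_pair (ab : vec * vec) : bool :=
  let: (a, b) := ab in
  (a != b) && has (fun c => [&& c != a, c != b & incident (vcross a b) c]) PS.

Definition rich_line_vecs : seq vec :=
  undup_proportional [seq vcross ab.1 ab.2 | ab <- [seq (a, b) | a <- PS, b <- PS] & rich_pair ab].

Local Notation PL := rich_line_vecs.

Definition sextactic_vec (a : vec) : bool :=
  let: (x, y, z) := a in
  [&& zwt_nonzero x,
      zwt_add (zwt_add (zwt_cube x) (zwt_cube y)) (zwt_cube z) == zwt0 &
      zwt_mul (zwt_mul (zwt_sub (zwt_cube x) (zwt_cube y)) (zwt_sub (zwt_cube y) (zwt_cube z)))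
              (zwt_sub (zwt_cube z) (zwt_cube x)) == zwt0].

Definition pairwise_independent (s : seq vec) : bool :=
  all (fun a => all (fun b => (a == b) || vec_nonzero (vcross a b)) s) s.

Lemma all_sextactic_vec : all sextactic_vec PS. Proof. by vm_compute. Qed.
Lemma uniq_sextactic_vecs : uniq PS. Proof. by vm_compute. Qed.
Lemma independent_sextactic_vecs : pairwise_independent PS. Proof. by vm_compute. Qed.
Lemma uniq_rich_line_vecs : uniq PL. Proof. by vm_compute. Qed.
Lemma independent_rich_line_vecs : pairwise_independent PL. Proof. by vm_compute. Qed.
Lemma rich_line_vecs_nonzero : all vec_nonzero PL. Proof. by vm_compute. Qed.
Lemma size_rich_line_vecs : size PL = 81%N. Proof. by vm_compute. Qed.
Lemma incident_decided :
  all (fun m => all (fun a => incident m a || zwt_nonzero (vdot m a)) PS) PL.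
Proof. by vm_compute. Qed.
Lemma count_points_on_lines : all (fun m => count (incident m) PS == 3)%N PL.
Proof. by vm_compute. Qed.
Lemma count_lines_through_points : all (fun a => count (incident^~ a) PL == 9)%N PS.
Proof. by vm_compute. Qed.
Lemma pairs_on_rich_lines :
  all (fun a => all (fun b => [|| a == b, has (fun m => incident m a && incident m b) PL |
    all (fun c => [|| c == a, c == b | zwt_nonzero (vdot (vcross a b) c)]) PS]) PS) PS.
Proof. by vm_compute. Qed.

Lemma mem_sextactic_vecs u v : u \in cube_roots1 -> v \in cube_roots1 ->
  [/\ (zwt1, u, zwt_opp (zwt_mul zwtT v)) \in PS,
      (zwt1, zwt_opp (zwt_mul zwtT v), u) \in PS
    & (zwtT, zwt_opp u, zwt_opp v) \in PS].
Proof.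
by rewrite !inE => /or3P[]/eqP-> /or3P[]/eqP->; split; vm_compute.
Qed.

(* Certificates are checked by vm_compute; elsewhere unification must never
   try to evaluate these lists. *)
Opaque sextactic_vecs rich_line_vecs.

Definition intZ (R : nzRingType) (n : Z) : R := (int_of_Z n)%:~R.

Lemma intZ_add (R : nzRingType) (m n : Z) : intZ R (m + n)%Z = intZ R m + intZ R n.
Proof. by rewrite /intZ -rmorphD; congr _%:~R; exact: (rmorphD int_of_Z). Qed.

Lemma intZ_mul (R : nzRingType) (m n : Z) : intZ R (m * n)%Z = intZ R m * intZ R n.
Proof. by rewrite /intZ -rmorphM; congr _%:~R; exact: (rmorphM int_of_Z). Qed.

Lemma intZ_opp (R : nzRingType) (n : Z) : intZ R (- n)%Z = - intZ R n.
Proof. by rewrite /intZ -rmorphN; congr _%:~R; exact: (rmorphN int_of_Z). Qed.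

Lemma intZ0 (R : nzRingType) : intZ R Z0 = 0. Proof. by []. Qed.
Lemma intZ1 (R : nzRingType) : intZ R (Zpos xH) = 1. Proof. by []. Qed.
Lemma intZ2 (R : nzRingType) : intZ R (Zpos (xO xH)) = 2. Proof. by []. Qed.
Lemma intZN1 (R : nzRingType) : intZ R (Zneg xH) = -1. Proof. by []. Qed.

Lemma intZ_neq0 (R : idomainType) (n : Z) : has_pchar0 R -> n != Z0 -> intZ R n != 0.
Proof.
move=> char0 n0; have : int_of_Z n != 0.
  by apply: contra n0 => /eqP n0; rewrite -[n]int_of_ZK n0.
rewrite /intZ; case: (int_of_Z n) => k k0;
  by rewrite ?NegzE ?mulrNz ?oppr_eq0 (pcharf0P R).1.
Qed.

Section Evaluation.

Variables (R : comNzRingType) (w t : R).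

Definition ev_cubic (a : cubic) : R :=
  let: (a0, a1, a2) := a in intZ R a0 + intZ R a1 * t + intZ R a2 * t ^+ 2.

Definition ev (x : zwt) : R := let: (A, B) := x in ev_cubic A + w * ev_cubic B.

Lemma ev_cubic_add a b : ev_cubic (cubic_add a b) = ev_cubic a + ev_cubic b.
Proof. by case: a => [[? ?] ?]; case: b => [[? ?] ?]; rewrite /= !intZ_add; ring. Qed.

Lemma ev_cubic_opp a : ev_cubic (cubic_opp a) = - ev_cubic a.
Proof. by case: a => [[? ?] ?]; rewrite /= !intZ_opp; ring. Qed.

Lemma ev_add x y : ev (zwt_add x y) = ev x + ev y.
Proof. by case: x => ? ?; case: y => ? ?; rewrite /= !ev_cubic_add; ring. Qed.

Lemma ev_opp x : ev (zwt_opp x) = - ev x.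
Proof. by case: x => ? ?; rewrite /= !ev_cubic_opp; ring. Qed.

Lemma ev_sub x y : ev (zwt_sub x y) = ev x - ev y.
Proof. by rewrite /zwt_sub ev_add ev_opp. Qed.

Lemma ev_of_Z n : ev (zwt_of_Z n) = intZ R n.
Proof. by rewrite /= ?(intZ0, intZ1, intZN1); ring. Qed.

Lemma ev0 : ev zwt0 = 0. Proof. by rewrite ev_of_Z. Qed.
Lemma ev1 : ev zwt1 = 1. Proof. by rewrite ev_of_Z. Qed.
Lemma evT : ev zwtT = t. Proof. by rewrite /= ?(intZ0, intZ1, intZN1); ring. Qed.
Lemma evW : ev zwtW = w. Proof. by rewrite /= ?(intZ0, intZ1, intZN1); ring. Qed.

Hypothesis t3 : t ^+ 3 = 2.
Hypothesis w3 : w ^+ 2 + w + 1 = 0.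

Lemma sqrW : w ^+ 2 = - w - 1.
Proof. by apply/eqP; rewrite -subr_eq0 -w3; apply/eqP; ring. Qed.

Lemma evW2 : ev zwtW2 = w ^+ 2.
Proof. by rewrite /= intZ0 intZN1 sqrW; ring. Qed.

Lemma ev_cubic_mul a b : ev_cubic (cubic_mul a b) = ev_cubic a * ev_cubic b.
Proof.
case: a => [[a0 a1] a2]; case: b => [[b0 b1] b2].
cbv beta iota delta [cubic_mul ev_cubic].
by rewrite !(intZ_add, intZ_mul) intZ2 -t3; ring.
Qed.

Lemma ev_mul x y : ev (zwt_mul x y) = ev x * ev y.
Proof.
case: x => A B; case: y => C D; rewrite /= !(ev_cubic_add, ev_cubic_opp, ev_cubic_mul).
rewrite -[RHS]subr0 -(mul0r (ev_cubic B * ev_cubic D)) -w3; ring.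
Qed.

Lemma ev_cube x : ev (zwt_cube x) = ev x ^+ 3.
Proof. by rewrite /zwt_cube !ev_mul; ring. Qed.

End Evaluation.

Lemma ev_neq0 (R : idomainType) (w t : R) (x : zwt) :
  has_pchar0 R -> t ^+ 3 = 2 -> w ^+ 2 + w + 1 = 0 -> zwt_nonzero x -> ev w t x != 0.
Proof.
move=> char0 t3 w3 /andP[n0 /eqP normE].
have := intZ_neq0 char0 n0; rewrite -(ev_of_Z w t) -normE /zwt_norm !(ev_mul t3 w3).
by rewrite mulf_eq0 negb_or => /andP[].
Qed.

Section ProjectivePlane.

Variable F : fieldType.
Implicit Types (u v l p q : triple F) (k : F).

Definition cross3 u v : triple F :=
  let: (a1, a2, a3) := u in let: (b1, b2, b3) := v in
  (a2 * b3 - a3 * b2, a3 * b1 - a1 * b3, a1 * b2 - a2 * b1).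

Definition dot3 u v : F :=
  let: (a1, a2, a3) := u in let: (b1, b2, b3) := v in a1 * b1 + a2 * b2 + a3 * b3.

Definition scale3 k u : triple F := let: (a1, a2, a3) := u in (k * a1, k * a2, k * a3).

Definition lead_inv u : F :=
  let: (a1, a2, a3) := u in
  if a1 != 0 then a1^-1 else if a2 != 0 then a2^-1 else a3^-1.

Definition normalize u : triple F := scale3 (lead_inv u) u.

Lemma on_lineE l p : on_line l p <-> dot3 l p = 0.
Proof. by case: l => [[? ?] ?]; case: p => [[? ?] ?]. Qed.

Lemma dot3_scalel k u v : dot3 (scale3 k u) v = k * dot3 u v.
Proof. by case: u => [[? ?] ?]; case: v => [[? ?] ?] /=; ring. Qed.

Lemma dot3_scaler k u v : dot3 u (scale3 k v) = k * dot3 u v.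
Proof. by case: u => [[? ?] ?]; case: v => [[? ?] ?] /=; ring. Qed.

Lemma cross3_scale k k' u v :
  cross3 (scale3 k u) (scale3 k' v) = scale3 (k * k') (cross3 u v).
Proof. by case: u => [[? ?] ?]; case: v => [[? ?] ?] /=; congr (_, _, _); ring. Qed.

Lemma cross3_scaler k u v : cross3 u (scale3 k v) = scale3 k (cross3 u v).
Proof. by case: u => [[? ?] ?]; case: v => [[? ?] ?] /=; congr (_, _, _); ring. Qed.

Lemma cross3_self u : cross3 u u = (0, 0, 0).
Proof. by case: u => [[? ?] ?] /=; congr (_, _, _); ring. Qed.

Lemma scale3_scale k k' u : scale3 k (scale3 k' u) = scale3 (k * k') u.
Proof. by case: u => [[? ?] ?] /=; congr (_, _, _); ring. Qed.

Lemma scale3_1 u : scale3 1 u = u.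
Proof. by case: u => [[? ?] ?] /=; rewrite !mul1r. Qed.

Lemma scale3_0 k : scale3 k (0, 0, 0) = (0, 0, 0).
Proof. by rewrite /= mulr0. Qed.

Lemma scale3_eq0 k u : k != 0 -> scale3 k u = (0, 0, 0) -> u = (0, 0, 0).
Proof.
move=> k0; case: u => [[? ?] ?] [/eqP + /eqP + /eqP].
by rewrite !mulf_eq0 (negbTE k0) /= => /eqP-> /eqP-> /eqP->.
Qed.

Lemma lead_inv_neq0 u : u <> (0, 0, 0) -> lead_inv u != 0.
Proof.
case: u => [[a b] c] /= u0.
case: ifP => [|/negbFE/eqP a0]; first by rewrite invr_eq0.
case: ifP => [|/negbFE/eqP b0]; first by rewrite invr_eq0.
by rewrite invr_eq0; apply/eqP => c0; apply: u0; rewrite a0 b0 c0.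
Qed.

Lemma normalize_normalized u : u <> (0, 0, 0) -> normalized (normalize u).
Proof.
case: u => [[a b] c] u0; rewrite /normalize /=.
have [a0|a0] := eqVneq a 0; last by rewrite mulVf ?oner_neq0.
rewrite a0 mulr0 eqxx /=; have [b0|b0] := eqVneq b 0; last by rewrite mulVf ?oner_neq0.
rewrite b0 mulr0 eqxx /= mulVf //; apply/eqP => c0; apply: u0; by rewrite a0 b0 c0.
Qed.

Lemma normalized_cross3_eq u v :
  normalized u -> normalized v -> cross3 u v = (0, 0, 0) -> u = v.
Proof.
case: u => [[a b] c]; case: v => [[x y] z] /= nu nv [/eqP e1 /eqP e2 /eqP e3].
move: e1 e2 e3; rewrite !subr_eq0 => /eqP e1 /eqP e2 /eqP e3.
have one_neq0 (k : F) : k = 0 -> k = 1 -> False.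
  by move=> -> /eqP; rewrite eq_sym oner_eq0.
have [a0|a0] := eqVneq a 0; rewrite ?a0 ?eqxx /= in nu e2 e3; last first.
  subst a; rewrite !mul1r in e2 e3; subst y z.
  have [x0|x0] := eqVneq x 0; last by rewrite x0 in nv; rewrite nv !mulr1.
  by move: nv; rewrite x0 !mulr0 eqxx => /one_neq0.
have [b0|b0] := eqVneq b 0; rewrite ?b0 ?eqxx /= in nu e1 e3; last first.
  subst a b; rewrite mul0r mul1r in e3; rewrite mul1r in e1; subst x z.
  move: nv; rewrite eqxx /=; have [y0|y0] := eqVneq y 0; last by move=> /= ->; rewrite mulr1.
  by rewrite y0 mulr0 => /one_neq0.
subst a b c; rewrite mul0r mul1r in e1; rewrite mul1r mul0r in e2.
by move: nv; rewrite -e1 e2 eqxx /= => ->.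
Qed.

Lemma normalize_eq_cross3 u v : u <> (0, 0, 0) -> v <> (0, 0, 0) ->
  normalize u = normalize v -> cross3 u v = (0, 0, 0).
Proof.
move=> u0 v0 uv; apply: (@scale3_eq0 (lead_inv u * lead_inv v)).
  by rewrite mulf_neq0 ?lead_inv_neq0.
by rewrite -cross3_scale -/(normalize u) -/(normalize v) uv cross3_self.
Qed.

Lemma cross3_orthogonal l p q :
  dot3 l p = 0 -> dot3 l q = 0 -> cross3 l (cross3 p q) = (0, 0, 0).
Proof.
case: l => [[a b] c]; case: p => [[x y] z]; case: q => [[x' y'] z'] /= lp lq.
have expand (k k' : F) : k * (a * x' + b * y' + c * z') - k' * (a * x + b * y + c * z) = 0.
  by rewrite lp lq !mulr0 subr0.
by congr (_, _, _);
  [rewrite -(expand x x') | rewrite -(expand y y') | rewrite -(expand z z')]; ring.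
Qed.

Lemma normalized_line_through l p q : normalized l -> dot3 l p = 0 -> dot3 l q = 0 ->
  cross3 p q <> (0, 0, 0) -> l = normalize (cross3 p q).
Proof.
move=> nl lp lq pq0; apply: normalized_cross3_eq => //; first exact: normalize_normalized.
by rewrite /normalize cross3_scaler cross3_orthogonal // scale3_0.
Qed.

End ProjectivePlane.

Lemma has_card_image (T U : eqType) (f : U -> T) (s : seq U) (P : T -> Prop) :
  uniq s -> {in s &, injective f} -> (forall x, P x <-> exists2 a, a \in s & x = f a) ->
  has_card P (size s).
Proof.
move=> us f_inj Pf; exists (map f s); split; first by rewrite map_inj_in_uniq.
  by rewrite size_map.
move=> x; split=> [/mapP[a sa ->] | /Pf[a sa ->]]; last exact: map_f.
by apply/Pf; exists a.
Qed.

Lemma uniq_size3_cases (T : eqType) (s : seq T) : size s = 3 -> uniq s ->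
  exists a b c, s = [:: a; b; c] /\ [/\ a != b, b != c & a != c].
Proof.
case: s => [|a [|b [|c [|d s]]]] //= _; rewrite !inE !negb_or.
by case/and3P=> /andP[ab ac] bc _; exists a, b, c.
Qed.

Lemma sextactic_eq_scale (F : fieldType) (k : F) (p : triple F) :
  sextactic_eq p -> sextactic_eq (scale3 k p).
Proof.
case: p => [[x y] z] [fermat sext]; split.
  by rewrite -[RHS](mulr0 (k ^+ 3)) -fermat /=; ring.
by rewrite -[RHS](mulr0 ((k ^+ 3) ^+ 3)) -sext /=; ring.
Qed.

Section SextacticConfiguration.

Variables (F : fieldType) (w t : F).
Hypotheses (char0 : has_pchar0 F) (t3 : t ^+ 3 = 2) (w3 : w ^+ 2 + w + 1 = 0).

Local Notation ev := (ev w t).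

Definition ev_vec (u : vec) : triple F := let: (a1, a2, a3) := u in (ev a1, ev a2, ev a3).

Definition point (a : vec) : triple F := scale3 (ev a.1.1)^-1 (ev_vec a).

Definition line (m : vec) : triple F := normalize (ev_vec m).

Lemma ev_vcross u v : ev_vec (vcross u v) = cross3 (ev_vec u) (ev_vec v).
Proof.
by case: u => [[? ?] ?]; case: v => [[? ?] ?]; rewrite /= !(ev_sub, ev_mul t3 w3).
Qed.

Lemma ev_vdot u v : ev (vdot u v) = dot3 (ev_vec u) (ev_vec v).
Proof.
by case: u => [[? ?] ?]; case: v => [[? ?] ?]; rewrite /= !(ev_add, ev_mul t3 w3).
Qed.

Lemma ev_vec_neq0 u : vec_nonzero u -> ev_vec u <> (0, 0, 0).
Proof.
case: u => [[a1 a2] a3] /or3P nz [e1 e2 e3].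
by case: nz => /(ev_neq0 char0 t3 w3); rewrite ?e1 ?e2 ?e3 eqxx.
Qed.

Lemma ev_incident m a : incident m a -> dot3 (ev_vec m) (ev_vec a) = 0.
Proof. by rewrite -ev_vdot => /eqP->; rewrite ev0. Qed.

Lemma pairwise_independent_ev s a b : pairwise_independent s -> a \in s -> b \in s -> a != b ->
  cross3 (ev_vec a) (ev_vec b) <> (0, 0, 0).
Proof.
move=> /allP/(_ a) indep sa sb ab; have /allP/(_ b sb) := indep sa.
by rewrite (negbTE ab) -ev_vcross => /ev_vec_neq0.
Qed.

Lemma independent_points a b : a \in PS -> b \in PS -> a != b ->
  cross3 (ev_vec a) (ev_vec b) <> (0, 0, 0).
Proof. exact: pairwise_independent_ev independent_sextactic_vecs. Qed.

Lemma independent_lines m m' : m \in PL -> m' \in PL -> m != m' ->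
  cross3 (ev_vec m) (ev_vec m') <> (0, 0, 0).
Proof. exact: pairwise_independent_ev independent_rich_line_vecs. Qed.

Lemma point_lead_neq0 a : a \in PS -> ev a.1.1 != 0.
Proof.
move/(allP all_sextactic_vec); case: a => [[x y] z] /and3P[+ _ _].
exact: ev_neq0.
Qed.

Lemma ev_vec_point a : a \in PS -> ev_vec a = scale3 (ev a.1.1) (point a).
Proof. by move=> aS; rewrite scale3_scale mulfV ?scale3_1 ?point_lead_neq0. Qed.

Lemma inS_point a : a \in PS -> inS (point a).
Proof.
move=> aS; have := allP all_sextactic_vec a aS; have := point_lead_neq0 aS.
case: a aS => [[x y] z] _ /= x0 /and3P[_ /eqP fermat /eqP sext]; split.
  by rewrite /= mulVf ?oner_neq0.
apply: sextactic_eq_scale; split.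
  by move: fermat => /(congr1 ev); rewrite !(ev_add, ev_cube t3 w3) ev0.
by move: sext => /(congr1 ev); rewrite !(ev_mul t3 w3, ev_sub, ev_cube t3 w3) ev0.
Qed.

Lemma point_inj : {in PS &, injective point}.
Proof.
move=> a b aS bS ab; apply/eqP; apply: contraT => /(independent_points aS bS).
by rewrite !ev_vec_point // ab cross3_scale cross3_self scale3_0.
Qed.

Lemma point_neq a b : a \in PS -> b \in PS -> a != b -> point a <> point b.
Proof. by move=> aS bS /eqP ab /(point_inj aS bS). Qed.

Lemma on_line_point l a : a \in PS -> on_line l (point a) <-> dot3 l (ev_vec a) = 0.
Proof.
move=> aS; rewrite on_lineE dot3_scaler; split=> [/eqP|->]; last by rewrite mulr0.
by rewrite mulf_eq0 invr_eq0 (negbTE (point_lead_neq0 aS)) => /eqP.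
Qed.

Lemma cube_eq_cases x a : x ^+ 3 = a ^+ 3 -> exists2 u, u \in cube_roots1 & x = a * ev u.
Proof.
move=> xa; have : (x - a * ev zwt1) * (x - a * ev zwtW) * (x - a * ev zwtW2) = 0.
  rewrite ev1 evW (evW2 _ w3); transitivity (x ^+ 3 - a ^+ 3 +
    (w ^+ 2 + w + 1) * (- x ^+ 2 * a + x * a ^+ 2 * w - a ^+ 3 * (w - 1))); first ring.
  by rewrite xa w3 subrr mul0r addr0.
move/eqP; rewrite !mulf_eq0 !subr_eq0 => /orP[/orP[]|] /eqP xE;
  by [exists zwt1 | exists zwtW | exists zwtW2]; rewrite ?inE ?eqxx ?orbT.
Qed.

Lemma two_neq0 : (2 : F) != 0.
Proof. by rewrite ((pcharf0P F).1 char0). Qed.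

Lemma inS_lead1 (x y z : F) : inS (x, y, z) -> x = 1.
Proof.
case=> /= nrm [fermat sext]; have [x0|x0] := eqVneq x 0; last by move: nrm; rewrite x0.
subst x; rewrite exprS mul0r add0r in fermat.
have y3 : y ^+ 3 = - z ^+ 3 by apply/eqP; rewrite -addr_eq0 fermat.
have /eqP : - 2 * (z ^+ 3) ^+ 3 = 0 by rewrite -sext y3; ring.
rewrite mulf_eq0 oppr_eq0 (negbTE two_neq0) !expf_eq0 /= => /eqP z0.
have /eqP : y ^+ 3 = 0 by rewrite y3 z0 exprS mul0r oppr0.
rewrite expf_eq0 /= => /eqP y0.
by move: nrm; rewrite y0 z0 eqxx /= => /eqP; rewrite eq_sym oner_eq0.
Qed.

Lemma inS_point_of p : inS p -> exists2 a, a \in PS & p = point a.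
Proof.
case: p => [[x y] z] Sp; have x1 := inS_lead1 Sp; case: Sp => _ /=.
rewrite x1 expr1n => -[fermat /eqP]; rewrite !mulf_eq0 !subr_eq0 => /orP[/orP[]|] /eqP.
- move=> y3; have [u uU ->] : exists2 u, u \in cube_roots1 & y = 1 * ev u.
    by apply: cube_eq_cases; rewrite expr1n y3.
  have [v vU ->] : exists2 v, v \in cube_roots1 & z = - t * ev v.
    by apply: cube_eq_cases; rewrite exprNn t3 -[RHS]addr0 -fermat -y3; ring.
  exists (zwt1, u, zwt_opp (zwt_mul zwtT v)); first by case: (mem_sextactic_vecs uU vU).
  cbn [point ev_vec scale3 fst snd].
  by rewrite !(ev1, ev_opp, ev_mul t3 w3, evT) invr1; congr (_, _, _); ring.
- move=> yz; have t0 : t != 0.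
    by apply/eqP => t0; move: two_neq0; rewrite -t3 t0 exprS mul0r eqxx.
  have [u uU yE] : exists2 u, u \in cube_roots1 & t * y = -1 * ev u.
    by apply: cube_eq_cases; rewrite exprMn t3 -[RHS]addr0 -fermat -yz; ring.
  have [v vU zE] : exists2 v, v \in cube_roots1 & t * z = -1 * ev v.
    by apply: cube_eq_cases; rewrite exprMn t3 -[RHS]addr0 -fermat yz; ring.
  exists (zwtT, zwt_opp u, zwt_opp v); first by case: (mem_sextactic_vecs uU vU).
  cbn [point ev_vec scale3 fst snd].
  rewrite !(ev_opp, evT) (mulVf t0) -[y](mulKf t0) -[z](mulKf t0) yE zE.
  by congr (_, _, _); ring.
- move=> z3; have [u uU ->] : exists2 u, u \in cube_roots1 & z = 1 * ev u.
    by apply: cube_eq_cases; rewrite expr1n z3.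
  have [v vU ->] : exists2 v, v \in cube_roots1 & y = - t * ev v.
    by apply: cube_eq_cases; rewrite exprNn t3 -[RHS]addr0 -fermat z3; ring.
  exists (zwt1, zwt_opp (zwt_mul zwtT v), u); first by case: (mem_sextactic_vecs uU vU).
  cbn [point ev_vec scale3 fst snd].
  by rewrite !(ev1, ev_opp, ev_mul t3 w3, evT) invr1; congr (_, _, _); ring.
Qed.

Lemma line_vec_neq0 m : m \in PL -> ev_vec m <> (0, 0, 0).
Proof. by move/(allP rich_line_vecs_nonzero)/ev_vec_neq0. Qed.

Lemma line_inj : {in PL &, injective line}.
Proof.
move=> m m' mL mL' mm'; apply/eqP; apply: contraT.
move=> /(independent_lines mL mL') indep.
by case: (indep (normalize_eq_cross3 (line_vec_neq0 mL) (line_vec_neq0 mL') mm')).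
Qed.

Lemma incidentP m a : m \in PL -> a \in PS ->
  dot3 (ev_vec m) (ev_vec a) = 0 <-> incident m a.
Proof.
move=> mL aS; split; last exact: ev_incident.
rewrite -ev_vdot => dot0.
case/orP: (allP (allP incident_decided m mL) a aS) => [ma | /(ev_neq0 char0 t3 w3)/eqP nz].
  exact: ma.
by case: (nz dot0).
Qed.

Lemma on_line_lineP m a : m \in PL -> a \in PS -> on_line (line m) (point a) <-> incident m a.
Proof.
move=> mL aS; apply: (iff_trans (on_line_point _ aS)); apply: iff_trans (incidentP mL aS).
rewrite dot3_scalel; split=> [/eqP|->]; last by rewrite mulr0.
by rewrite mulf_eq0 (negbTE (lead_inv_neq0 (line_vec_neq0 mL))) orFb => /eqP.
Qed.

Lemma inL_line m : m \in PL -> inL (line m).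
Proof.
move=> mL; split; first exact/normalize_normalized/line_vec_neq0.
have size3 : size (filter (incident m) PS) = 3.
  by rewrite size_filter; apply/eqP; exact: (allP count_points_on_lines m mL).
have [a [b [c [sE [ab bc ac]]]]] := uniq_size3_cases size3 (filter_uniq _ uniq_sextactic_vecs).
have onm x : x \in [:: a; b; c] -> x \in PS /\ on_line (line m) (point x).
  by rewrite -sE mem_filter => /andP[mx xS]; split; last exact/on_line_lineP.
have [aS la] := onm a (mem_head _ _).
have [bS lb] : b \in PS /\ on_line (line m) (point b) by apply: onm; rewrite !inE eqxx orbT.
have [cS lc] : c \in PS /\ on_line (line m) (point c) by apply: onm; rewrite !inE eqxx !orbT.
exists (point a), (point b), (point c).
split; first by split; exact: inS_point.
by split; [split | split; exact: point_neq].
Qed.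

Lemma line_through_points l a b : a \in PS -> b \in PS -> a != b -> normalized l ->
  on_line l (point a) -> on_line l (point b) -> l = normalize (cross3 (ev_vec a) (ev_vec b)).
Proof.
move=> aS bS ab nl /(on_line_point _ aS) la /(on_line_point _ bS) lb.
exact: normalized_line_through (independent_points aS bS ab).
Qed.

Lemma inL_lineP l : inL l -> exists2 m, m \in PL & l = line m.
Proof.
case=> nl [p [q [r [[Sp Sq Sr] [[lp lq lr] [pq qr pr]]]]]].
have [a aS pa] := inS_point_of Sp; have [b bS qb] := inS_point_of Sq.
have [c cS rc] := inS_point_of Sr; subst p q r.
have ab : a != b by apply/eqP => ab; apply: pq; rewrite ab.
have lE := line_through_points aS bS ab nl lp lq.
have := allP (allP pairs_on_rich_lines a aS) b bS.
rewrite (negbTE ab) orFb => /orP[/hasP[m mL /andP[ma mb]] | /allP/(_ c cS)].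
  exists m; first exact: mL.
  rewrite lE; symmetry; apply: (line_through_points aS bS ab).
  - exact/normalize_normalized/line_vec_neq0.
  - exact/on_line_lineP.
  - exact/on_line_lineP.
have [ca|ca] := eqVneq c a; first by rewrite ca in pr; case: (pr erefl).
have [cb|cb] := eqVneq c b; first by rewrite cb in qr; case: (qr erefl).
rewrite !orFb => /(ev_neq0 char0 t3 w3); rewrite ev_vdot ev_vcross.
move/(on_line_point _ cS): lr; rewrite lE /normalize dot3_scalel => /eqP.
rewrite mulf_eq0 (negbTE (lead_inv_neq0 (independent_points aS bS ab))) /=.
by move=> /eqP->; rewrite eqxx; case.
Qed.

Lemma card_rich_lines : has_card (@inL F) 81.
Proof.
rewrite -size_rich_line_vecs; apply: has_card_image uniq_rich_line_vecs line_inj _ => l.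
by split=> [/inL_lineP | [m mL ->]]; last exact: inL_line.
Qed.

Lemma card_points_on_rich_line (l : triple F) :
  inL l -> has_card (fun p => inS p /\ on_line l p) 3.
Proof.
case/inL_lineP => m mL ->; have /eqP <- := allP count_points_on_lines m mL.
rewrite -size_filter; apply: has_card_image => [|a b|p].
- exact: filter_uniq uniq_sextactic_vecs.
- move=> /(mem_subseq (filter_subseq _ _)) aS /(mem_subseq (filter_subseq _ _)) bS.
  exact: point_inj.
split=> [[/inS_point_of[a aS ->] /(on_line_lineP mL aS) ma] | [a]].
  by exists a; first by rewrite mem_filter ma aS.
by rewrite mem_filter => /andP[ma aS] ->; split; [exact: inS_point | exact/on_line_lineP].
Qed.

Lemma card_rich_lines_through_point (p : triple F) :
  inS p -> has_card (fun l => inL l /\ on_line l p) 9.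
Proof.
case/inS_point_of => a aS ->; have /eqP <- := allP count_lines_through_points a aS.
rewrite -size_filter; apply: has_card_image => [|m m'|l].
- exact: filter_uniq uniq_rich_line_vecs.
- move=> /(mem_subseq (filter_subseq _ _)) mL /(mem_subseq (filter_subseq _ _)) mL'.
  exact: line_inj.
split=> [[/inL_lineP[m mL ->] /(on_line_lineP mL aS) ma] | [m]].
  by exists m; first by rewrite mem_filter mL andbT; exact: ma.
by rewrite mem_filter => /andP[ma mL] ->; split; [exact: inL_line | exact/on_line_lineP].
Qed.

End SextacticConfiguration.

Theorem mainTheorem8 (F : closedFieldType) (charF0 : [pchar F] =i pred0) :
  [/\ has_card (@inL F) 81,
      (forall l : triple F, inL l ->
         has_card (fun p => inS p /\ on_line l p) 3)
    & (forall p : triple F, inS p ->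
         has_card (fun l => inL l /\ on_line l p) 9)].
Proof.
have [t t3] : exists t : F, t ^+ 3 = 2.
  have [x xE] := @solve_monicpoly F 3 (fun i => if i == 0%N then 2 else 0) isT.
  by exists x; rewrite xE !big_ord_recl big_ord0 /= !mul0r expr0 mulr1 !addr0.
have [w w3] : exists w : F, w ^+ 2 + w + 1 = 0.
  have [x xE] := @solve_monicpoly F 2 (fun=> -1) isT.
  by exists x; rewrite xE !big_ord_recl big_ord0 /= expr0 expr1 addr0; ring.
split; [exact: (card_rich_lines charF0 t3 w3) | exact: (card_points_on_rich_line charF0 t3 w3)
     | exact: (card_rich_lines_through_point charF0 t3 w3)].
Qed.
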